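(* Let $d\ge 2$. There are a constant $C>0$ and $n_0(d)$ depending only on $d$ such that for all $n\ge n_0(d)$: if $\mathcal{F}$, $B_i$ are as in the context, $J\subseteq[n]$ with $|J|\le n/4$, and $K\ge 0$ is a real number with $|E(\mathcal{G}_J)|\ge\binom{n-|J|}{d}-Kn$, then $$|\mathcal{T}_J^4\cup\mathcal{T}_J^5|\le(|J|-1)\binom{n-|J|}{d-1}+CK.$$
   Context: Let $\mathcal{F}=\{F_1,\dots,F_m\}\subseteq\binom{[n]}{d+1}$ consist of distinct sets and have VC-dimension at most $d$ (no $(d+1)$-set $S$ is shattered, i.e. no $S$ such that every $A\subseteq S$ equals $F\cap S$ for some $F\in\mathcal{F}$). For $i\in[m]$, call $B\subsetneq F_i$ admissible for $F_i$ if $F\cap F_i\neq B$ for every $F\in\mathcal{F}$. For each $i$, $B_i$ is a fixed admissible set for $F_i$ of maximum cardinality among all admissible sets. For $J\subseteq[n]$, $\mathcal{G}_J$ is the $d$-uniform hypergraph on vertex set $[n]\setminus J$ with edge set $E(\mathcal{G}_J):=\{F_k\setminus J: k\in[m],\ |F_k\cap J|=1\}$. $\mathcal{T}_J^4$ is the set of $F_k\in\mathcal{F}$ with $|F_k\cap J|=1$, $|B_k|=d$ and $|B_k\cap J|=1$; $\mathcal{T}_J^5$ is the set of $F_k\in\mathcal{F}$ with $|F_k\cap J|=2$ and $F_k\setminus J\subseteq B_k$. *)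

From HB Require Import structures.
From mathcomp Require Import all_boot all_order all_algebra.
From mathcomp Require Import reals.
Set Implicit Arguments. Unset Strict Implicit. Unset Printing Implicit Defensive.

(* Ground set [n] is 'I_n; a set system is fam : {set {set 'I_n}}
   (distinct sets, so indexing F_i by the set itself is harmless). *)

Definition shattered (n : nat) (fam : {set {set 'I_n}}) (S : {set 'I_n}) : bool :=
  [forall A : {set 'I_n}, (A \subset S) ==> [exists F in fam, F :&: S == A]].

Definition vc_dim_le (n : nat) (fam : {set {set 'I_n}}) (d : nat) : Prop :=
  forall S : {set 'I_n}, #|S| = d.+1 -> ~~ shattered fam S.

Definition admissible (n : nat) (fam : {set {set 'I_n}}) (Fi B : {set 'I_n}) : bool :=
  (B \proper Fi) && [forall F in fam, F :&: Fi != B].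

Definition max_admissible (n : nat) (fam : {set {set 'I_n}}) (Fi B : {set 'I_n}) : Prop :=
  admissible fam Fi B /\ forall B', admissible fam Fi B' -> #|B'| <= #|B|.

Definition EG (n : nat) (fam : {set {set 'I_n}}) (J : {set 'I_n}) : {set {set 'I_n}} :=
  [set F :\: J | F in fam & #|F :&: J| == 1].

Definition T4 (n d : nat) (fam : {set {set 'I_n}}) (B : {set 'I_n} -> {set 'I_n})
    (J : {set 'I_n}) : {set {set 'I_n}} :=
  [set F in fam | [&& #|F :&: J| == 1, #|B F| == d & #|B F :&: J| == 1]].

Definition T5 (n : nat) (fam : {set {set 'I_n}}) (B : {set 'I_n} -> {set 'I_n})
    (J : {set 'I_n}) : {set {set 'I_n}} :=
  [set F in fam | (#|F :&: J| == 2) && (F :\: J \subset B F)].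

From HB Require Import structures.
From mathcomp Require Import all_boot all_order all_algebra.
From mathcomp Require Import reals zify lra.
Import Order.TTheory GRing.Theory Num.Theory.
Set Implicit Arguments. Unset Strict Implicit. Unset Printing Implicit Defensive.

(* Group the sets F of T_J^4 :|: T_J^5 by S = B F :\: J, a (d-1)-subset of the
   complement of J.  In the fibre of S, the sets with |B F| = d have B F = j |: S for
   pairwise distinct apexes j in J, because a d-set B F lies in no other member of the
   family.  The other sets have F :\: J = B F = S, and their traces F :&: J are pairs of
   non-apex vertices of J that pairwise intersect, since a member containing S must meet
   each of them.  An intersecting family of pairs on w points has at most w members, so
   a fibre has at most |J| sets, and at most |J| - 1 unless S has at most |J| neighbours
   in G_J.  Each such bad S lies in about n/4 non-edges of G_J, each non-edge contains d
   sets S, and there are at most K n non-edges: hence at most 4 d K bad sets S. *)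

Section FiniteSets.
Variable T : finType.
Implicit Types (E : {set {set T}}) (A S W e : {set T}) (a b c z : T).

Lemma card_setId_sum (A : {pred T}) (P : pred T) :
  #|[set x in A | P x]| = \sum_(x in A) P x.
Proof. by rewrite -sum1dep_card big_mkcondr; apply: eq_bigr => x _; case: (P x). Qed.

Lemma setU1_inj S : {in ~: S &, injective (fun x => x |: S)}.
Proof.
move=> x y; rewrite inE => xS _ /= xyS.
by have := setU11 x S; rewrite xyS !inE (negbTE xS) orbF => /eqP.
Qed.

Lemma mem_setI_set1 A W c : A :&: W = [set c] -> c \in A /\ c \in W.
Proof. by move=> AW; apply/andP; rewrite -in_setI AW set11. Qed.

Lemma card2_set2 e a b : #|e| = 2 -> a \in e -> b \in e -> a != b -> e = [set a; b].
Proof.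
move=> e2 ae be ab; apply/esym/eqP; rewrite eqEcard e2 cards2 ab andbT.
by apply/subsetP => x; rewrite !inE => /orP[]/eqP->.
Qed.

Lemma card_star_lt E W c : c \in W ->
  {in E, forall e, [/\ e \subset W, #|e| = 2 & c \in e]} -> #|E| < #|W|.
Proof.
move=> cW EW.
have del_inj : {in E &, injective (fun e => e :\ c)}.
  move=> e1 e2 /EW[_ _ c1] /EW[_ _ c2] /= e12.
  by rewrite -(setD1K c1) -(setD1K c2) e12.
rewrite -(card_in_imset del_inj).
have sub : [set e :\ c | e in E] \subset [set A : {set T} | A \subset W :\ c & #|A| == 1].
  apply/subsetP => _ /imsetP[e eE ->]; have [eW e2 ce] := EW e eE.
  by rewrite inE setSD //=; move: e2; rewrite (cardsD1 c) ce add1n => -[->].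
apply: leq_ltn_trans (subset_leq_card sub) _.
by rewrite cards_draws bin1 (cardsD1 c W) cW.
Qed.

Lemma pair_sub_triangle e a b z : [&& a != b, a != z & b != z] -> #|e| = 2 ->
  e :&: [set a; b] != set0 -> e :&: [set b; z] != set0 -> e :&: [set a; z] != set0 ->
  e \subset [set a; b; z].
Proof.
move=> /and3P[ab az bz] /eqP/cards2P[p [q [_ ->]]].
set t := [set a; b; z].
have [abt bzt azt] : [/\ [set a; b] \subset t, [set b; z] \subset t & [set a; z] \subset t].
  by split; apply/subsetP => x; rewrite !inE => /orP[]->; rewrite ?orbT.
have other p' q' (s : {set T}) : p' \notin t -> s \subset t -> [set p'; q'] :&: s != set0 -> q' \in s.
  move=> p't st /set0Pn[x]; rewrite !inE => /andP[/orP[]/eqP-> xs] //.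
  by rewrite (subsetP st _ xs) in p't.
have no_common x : x \in [set a; b] -> x \in [set b; z] -> x \in [set a; z] -> False.
  rewrite !inE => /orP[]/eqP-> /orP[]/eqP eq1 /orP[]/eqP eq2;
    by move: ab az bz; rewrite ?eq1 ?eq2 eqxx.
have inside p' q' : [set p'; q'] :&: [set a; b] != set0 ->
    [set p'; q'] :&: [set b; z] != set0 -> [set p'; q'] :&: [set a; z] != set0 -> p' \in t.
  move=> m1 m2 m3; apply/negPn/negP => p't.
  exact: (no_common q' (other p' q' _ p't abt m1) (other p' q' _ p't bzt m2)
    (other p' q' _ p't azt m3)).
move=> m1 m2 m3; apply/subsetP => x; rewrite !inE => /orP[]/eqP->.
  by have := inside p q m1 m2 m3; rewrite !inE.
by have := inside q p; rewrite setUC !inE; apply.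
Qed.

Lemma card_intersecting_pairs_le E W :
  {in E, forall e, e \subset W /\ #|e| = 2} ->
  {in E &, forall e e', e :&: e' != set0} -> #|E| <= #|W|.
Proof.
move=> EW meet.
have [->|/set0Pn[e0 e0E]] := eqVneq E set0; first by rewrite cards0.
have [e0W /eqP/cards2P[a [b [ab e0ab]]]] := EW e0 e0E.
have star c : c \in e0 -> {in E, forall e, c \in e} -> #|E| <= #|W|.
  move=> ce0 cE; apply: ltnW; apply: (card_star_lt (subsetP e0W c ce0)) => e eE.
  by have [eW e2] := EW e eE; split; last exact: cE.
have [aE|/forall_inPn[e1 e1E ae1]] := boolP [forall e in E, a \in e].
  by apply: (star a); [rewrite e0ab !inE eqxx | exact/forall_inP].
have [bE|/forall_inPn[e2 e2E be2]] := boolP [forall e in E, b \in e].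
  by apply: (star b); [rewrite e0ab !inE eqxx orbT | exact/forall_inP].
have in_e0 e : e \in E -> exists2 x, x \in e & (x == a) || (x == b).
  by move=> eE; have /set0Pn[x] := meet e e0 eE e0E; rewrite inE e0ab !inE => /andP[]; exists x.
have be1 : b \in e1.
  by have [x xe1 /orP[]/eqP xab] := in_e0 e1 e1E; [rewrite -xab xe1 in ae1 | rewrite -xab].
have ae2 : a \in e2.
  by have [x xe2 /orP[]/eqP xab] := in_e0 e2 e2E; [rewrite -xab | rewrite -xab xe2 in be2].
have /set0Pn[z] := meet e1 e2 e1E e2E; rewrite inE => /andP[ze1 ze2].
have az : a != z by apply: contraNneq ae1 => ->.
have bz : b != z by apply: contraNneq be2 => ->.
have [_ e1c] := EW e1 e1E; have [e2W e2c] := EW e2 e2E.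
have e1bz := card2_set2 e1c be1 ze1 bz; have e2az := card2_set2 e2c ae2 ze2 az.
have sub : E \subset [set e : {set T} | e \subset [set a; b; z] & #|e| == 2].
  apply/subsetP => e eE; have [_ ec] := EW e eE; rewrite inE ec eqxx andbT.
  apply: pair_sub_triangle; rewrite ?ab ?az ?bz // -?e0ab -?e1bz -?e2az; exact: meet.
have abz3 : #|[set a; b; z]| = 3.
  by rewrite setUC cardsU1 cards2 !inE ab !(eq_sym z) (negbTE az) (negbTE bz).
have abzW : [set a; b; z] \subset W.
  apply/subsetP => x; rewrite !inE => /orP[/orP[]|]/eqP->.
  - by apply: (subsetP e0W); rewrite e0ab !inE eqxx.
  - by apply: (subsetP e0W); rewrite e0ab !inE eqxx orbT.
  - exact: (subsetP e2W).
apply: leq_trans (subset_leq_card sub) _.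
by rewrite cards_draws abz3 (leq_trans _ (subset_leq_card abzW)) ?abz3.
Qed.
End FiniteSets.

Section SetSystem.
Variables (n d : nat) (fam : {set {set 'I_n}}) (B : {set 'I_n} -> {set 'I_n}).
Hypothesis d_gt0 : 0 < d.
Hypothesis fam_card : forall F, F \in fam -> #|F| = d.+1.
Hypothesis B_max : forall F, F \in fam -> max_admissible fam F (B F).

Lemma B_proper F : F \in fam -> B F \proper F.
Proof. by case/B_max => /andP[]. Qed.

Lemma B_sub F : F \in fam -> B F \subset F.
Proof. by move/B_proper/proper_sub. Qed.

Lemma meet_neq_B F G : F \in fam -> G \in fam -> G :&: F != B F.
Proof. by case/B_max => /andP[_ /forall_inP B_trace] _ /B_trace. Qed.

(* Any other G containing B F would have the d-set B F as its trace on F. *)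
Lemma B_unique_superset F G :
  F \in fam -> #|B F| = d -> G \in fam -> B F \subset G -> G = F.
Proof.
move=> Ff BFd Gf BG; apply/eqP; apply: contraT => GF.
have GF_proper : G :&: F \proper F.
  rewrite properEneq subsetIr andbT; apply: contraNneq GF => GFF.
  by rewrite eq_sym eqEcard -{1}GFF subsetIl (fam_card Gf) (fam_card Ff) leqnn.
have : G :&: F == B F.
  rewrite eq_sym eqEcard subsetI BG B_sub //= BFd -ltnS -(fam_card Ff).
  exact: proper_card.
by rewrite (negbTE (meet_neq_B Ff Gf)).
Qed.

Section Trace.
Variable J : {set 'I_n}.

Definition outside_sets k := [set S : {set 'I_n} | S \subset ~: J & #|S| == k].
Definition TJ := T4 d fam B J :|: T5 fam B J.
Definition fibre S := [set F in TJ | B F :\: J == S].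
Definition link S := [set y in ~: J :\: S | y |: S \in EG fam J].
Definition non_edges := [set D in outside_sets d | D \notin EG fam J].
Definition bad_sets := [set S in outside_sets d.-1 | #|link S| <= #|J|].

Lemma card_outside_sets k : #|outside_sets k| = 'C(n - #|J|, k).
Proof. by rewrite cards_draws cardsCs setCK card_ord. Qed.

Lemma EG_outside : EG fam J \subset outside_sets d.
Proof.
apply/subsetP => _ /imsetP[G /setIdP[Gf /eqP GJ1] ->].
by rewrite inE subDset setUCr subsetT cardsD GJ1 fam_card ?subn1 /=.
Qed.

Lemma card_non_edges : #|non_edges| + #|EG fam J| = 'C(n - #|J|, d).
Proof.
rewrite -card_outside_sets -(cardsID (EG fam J) (outside_sets d)) addnC.
by rewrite (setIidPr EG_outside); congr (_ + _); apply: eq_card => D; rewrite !inE andbC.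
Qed.

Lemma TJ_fam F : F \in TJ -> F \in fam.
Proof. by rewrite !inE => /orP[]/andP[]. Qed.

Lemma T5_outside F : F \in T5 fam B J -> B F :\: J = F :\: J.
Proof.
case/setIdP=> Ff /andP[_ FJB]; apply/eqP; rewrite eqEsubset setSD ?B_sub //=.
by apply/subsetP => x xFJ; rewrite inE (subsetP FJB _ xFJ) andbT; case/setDP: xFJ.
Qed.

Lemma B_outside F : F \in TJ -> B F :\: J \in outside_sets d.-1.
Proof.
move=> /setUP[/setIdP[_] | FT5]; rewrite inE subDset setUCr subsetT /=.
  by case/and3P=> _ /eqP BFd /eqP BJ1; rewrite cardsD BJ1 BFd subn1.
have /setIdP[Ff /andP[/eqP FJ2 _]] := FT5.
by rewrite T5_outside // cardsD FJ2 fam_card ?subn2.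
Qed.

Lemma card_TJ_sum : #|TJ| = \sum_(S in outside_sets d.-1) #|fibre S|.
Proof.
rewrite -sum1_card (partition_big (fun F => B F :\: J) (mem (outside_sets d.-1))) /=.
  by apply: eq_bigr => S _; rewrite -sum1_card; apply: eq_bigl => F; rewrite [in RHS]inE.
by move=> F; apply: B_outside.
Qed.

Section Fibre.
Variable S : {set 'I_n}.
Hypothesis S_out : S \in outside_sets d.-1.

(* Apex members have B F = j |: S with j in J; flat members have B F = S. *)
Definition fibre_apex := fibre S :&: [set F | #|B F| == d].
Definition fibre_flat := fibre S :\: [set F | #|B F| == d].
Definition free_apexes := [set j in J | j |: S \notin B @: fibre_apex].

Lemma S_outside : S \subset ~: J /\ #|S| = d.-1.
Proof. by case/setIdP: S_out => SJ /eqP. Qed.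

Lemma fibre_apexP F : F \in fibre_apex ->
  [/\ F \in fam, #|B F| = d & exists2 j, j \in J & B F = j |: S].
Proof.
case/setIP=> /setIdP[FT /eqP BS]; rewrite inE => /eqP BFd.
have [_ Sc] := S_outside.
have /cards1P[j BJ] : #|B F :&: J| == 1.
  by apply/eqP; have := cardsID J (B F); rewrite BS BFd Sc; lia.
split; [exact: TJ_fam | done | exists j].
  by have /setIP[] : j \in B F :&: J by rewrite BJ set11.
by rewrite -(setID (B F) J) BJ BS.
Qed.

Lemma card_free_apexes : #|free_apexes| + #|fibre_apex| = #|J|.
Proof.
have B_inj : {in fibre_apex &, injective B}.
  move=> F1 F2 /fibre_apexP[F1f BF1d _] /fibre_apexP[F2f _ _] B12.
  by apply/esym/(B_unique_superset F1f BF1d F2f); rewrite B12 B_sub.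
have [SJ _] := S_outside.
have add_inj : {in J :\: free_apexes &, injective (fun j => j |: S)}.
  apply: sub_in2 (@setU1_inj _ S) => j /setDP[jJ _].
  by rewrite inE; apply: contraL jJ => /(subsetP SJ); rewrite inE.
have used : [set j |: S | j in J :\: free_apexes] = B @: fibre_apex.
  apply/setP => D; apply/imsetP/imsetP => [[j /setDP[jJ]] | [F FA ->]].
    by rewrite inE jJ negbK => /imsetP[F FA jSB] ->; exists F.
  have [_ _ [j jJ BFj]] := fibre_apexP FA.
  exists j => //; rewrite !inE jJ negbK andbT; apply/imsetP; exists F => //.
rewrite -(card_in_imset B_inj) -used (card_in_imset add_inj).
rewrite -(cardsID free_apexes J) (setIidPr _) //.
by apply/subsetP => j /setIdP[].
Qed.

Lemma fibre_flatP F : F \in fibre_flat ->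
  [/\ F \in fam, #|F :&: J| = 2, F :\: J = S & B F = S].
Proof.
case/setDP=> /setIdP[FT /eqP BS]; rewrite inE => BFd.
have Ff := TJ_fam FT; have [_ Sc] := S_outside.
have FT5 : F \in T5 fam B J.
  case/setUP: FT => // /setIdP[_ /and3P[_ BFd' _]].
  by rewrite BFd' in BFd.
have /setIdP[_ /andP[/eqP FJ2 _]] := FT5.
have FJS : F :\: J = S by rewrite -T5_outside.
have BJ_FJ : B F :&: J \subset F :&: J by rewrite setSI ?B_sub.
have BJ1 : #|B F :&: J| != 1.
  apply: contraNneq BFd => BJ1; apply/eqP.
  by rewrite -(cardsID J (B F)) BJ1 BS Sc; lia.
have BJ2 : #|B F :&: J| != 2.
  apply: contraNneq (proper_neq (B_proper Ff)) => BJ2.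
  have /eqP BJ : B F :&: J == F :&: J by rewrite eqEcard BJ_FJ FJ2 BJ2.
  by apply/eqP; rewrite -[B F](setID _ J) -[RHS](setID F J) BJ BS FJS.
have /eqP/cards0_eq BJ0 : #|B F :&: J| == 0.
  have : #|B F :&: J| <= 2 by rewrite -FJ2 subset_leq_card.
  by move: BJ1 BJ2; case: #|_| => [|[|[|]]].
by split; rewrite // -BS -[LHS](setID _ J) BJ0 set0U.
Qed.

(* Otherwise the trace G :&: F would be S = B F. *)
Lemma fibre_flat_meet F G : F \in fibre_flat -> G \in fam -> S \subset G ->
  G :&: (F :&: J) != set0.
Proof.
case/fibre_flatP=> Ff _ FJS BS Gf SG; apply: contraNneq (meet_neq_B Ff Gf) => GFJ0.
by rewrite -{1}(setID F J) setIUr GFJ0 set0U FJS (setIidPr SG) BS.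
Qed.

Lemma fibre_flat_free F : F \in fibre_flat -> F :&: J \subset free_apexes.
Proof.
move=> FF; have [Ff _ FJS _] := fibre_flatP FF.
apply/subsetP => x /setIP[xF xJ]; rewrite inE xJ /=; apply/imsetP => -[F' FA' xSB].
have [F'f BF'd _] := fibre_apexP FA'.
have F'F : F = F'.
  apply: (B_unique_superset F'f BF'd Ff); rewrite -xSB -FJS subUset sub1set xF.
  exact: subsetDl.
by case/setDP: FF; case/setIP: FA' => _; rewrite F'F => ->.
Qed.

Definition flat_traces := [set F :&: J | F in fibre_flat].

Lemma card_flat_traces : #|flat_traces| = #|fibre_flat|.
Proof.
apply: card_in_imset => F1 F2 /fibre_flatP[_ _ FJ1 _] /fibre_flatP[_ _ FJ2 _] /= F12.
by rewrite -(setID F1 J) -(setID F2 J) F12 FJ1 FJ2.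
Qed.

Lemma flat_traces_free e : e \in flat_traces -> e \subset free_apexes /\ #|e| = 2.
Proof.
by case/imsetP=> F FF ->; have [_ FJ2 _ _] := fibre_flatP FF; split; rewrite ?fibre_flat_free.
Qed.

Lemma card_fibre_split : #|fibre S| = #|fibre_apex| + #|fibre_flat|.
Proof. by rewrite cardsID. Qed.

Lemma card_fibre_le : #|fibre S| <= #|J|.
Proof.
rewrite card_fibre_split -card_free_apexes addnC leq_add2r -card_flat_traces.
apply: card_intersecting_pairs_le; first exact: flat_traces_free.
move=> _ _ /imsetP[F FF ->] /imsetP[F' FF' ->].
have [F'f _ F'JS _] := fibre_flatP FF'.
have /set0Pn[x] : F' :&: (F :&: J) != set0.
  by apply: fibre_flat_meet F'f _; rewrite // -F'JS subsetDl.
by rewrite !inE => /and3P[xF' xF xJ]; apply/set0Pn; exists x; rewrite !inE xF xF' xJ.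
Qed.

Lemma linkP y : y \in link S -> exists G c,
  [/\ G \in fam, G :&: J = [set c], S \subset G & G :\: J = y |: S].
Proof.
case/setIdP=> _ /imsetP[G /setIdP[Gf /cards1P[c GJ]] ySG].
exists G, c; split => //; apply: subset_trans (subsetDl G J).
by rewrite -ySG subsetUr.
Qed.

(* A link edge y |: S = G :\: J has its J-vertex c in an apex set B F, so F = G. *)
Lemma card_link_le : free_apexes = set0 -> #|link S| <= #|fibre_apex|.
Proof.
move=> free0.
have sub : [set y |: S | y in link S] \subset [set F :\: J | F in fibre_apex].
  apply/subsetP => _ /imsetP[y /linkP[G [c [Gf GJ SG GJy]]] ->].
  have [cG cJ] := mem_setI_set1 GJ.
  have : c \notin free_apexes by rewrite free0 inE.
  rewrite inE cJ negbK => /imsetP[F FA cSB].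
  have [Ff BFd _] := fibre_apexP FA.
  have GF : G = F by apply: (B_unique_superset Ff BFd Gf); rewrite -cSB subUset sub1set cG.
  by apply/imsetP; exists F; rewrite // -GF GJy.
have link_inj : {in link S &, injective (fun y => y |: S)}.
  by apply: sub_in2 (@setU1_inj _ S) => y /setIdP[/setDP[_ yS] _]; rewrite inE.
rewrite -(card_in_imset link_inj) (leq_trans (subset_leq_card sub)) //.
exact: leq_imset_card.
Qed.

Lemma link_flat_star y : y \in link S ->
  exists c, {in fibre_flat, forall F, c \in F :&: J}.
Proof.
case/linkP=> G [c [Gf GJ SG _]]; exists c => F FF.
have /set0Pn[x] := fibre_flat_meet FF Gf SG; rewrite !inE => /and3P[xG xF xJ].
have : x \in G :&: J by rewrite inE xG xJ.
by rewrite GJ => /set1P <-; rewrite xF xJ.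
Qed.

Lemma card_fibre_lt : #|J| < #|link S| -> #|fibre S| < #|J|.
Proof.
move=> J_lt_link; rewrite card_fibre_split -card_free_apexes.
have [flat0 | /set0Pn[F0 F0F]] := eqVneq fibre_flat set0.
  rewrite flat0 cards0 addn0 -{1}[#|fibre_apex|]add0n ltn_add2r card_gt0.
  apply: contraTneq J_lt_link => free0; rewrite -leqNgt.
  by rewrite (leq_trans (card_link_le free0)) // -card_free_apexes free0 cards0.
have /set0Pn[y /link_flat_star[c c_flat]] : link S != set0.
  by rewrite -card_gt0 (leq_ltn_trans _ J_lt_link).
rewrite addnC ltn_add2r -card_flat_traces.
apply: (card_star_lt (subsetP (fibre_flat_free F0F) c (c_flat F0 F0F))).
move=> _ /imsetP[F FF ->]; have [e_free e2] := flat_traces_free (imset_f _ FF).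
by split; rewrite ?c_flat.
Qed.

Lemma card_fibre_bound : #|fibre S| + 1 <= #|J| + (#|link S| <= #|J|).
Proof.
case: (leqP #|link S| #|J|) => [_ | /card_fibre_lt fibre_lt].
  by rewrite leq_add2r card_fibre_le.
by rewrite addn0 addn1.
Qed.
End Fibre.

Lemma card_TJ_le :
  #|TJ| + 'C(n - #|J|, d.-1) <= 'C(n - #|J|, d.-1) * #|J| + #|bad_sets|.
Proof.
rewrite card_TJ_sum -card_outside_sets /bad_sets card_setId_sum -sum_nat_const.
rewrite -[#|outside_sets _|]sum1_card -!big_split /=.
by apply: leq_sum => S; exact: card_fibre_bound.
Qed.

(* Each y outside J :|: S and outside the link gives the non-edge y |: S. *)
Lemma non_edges_through S : S \in outside_sets d.-1 -> #|link S| <= #|J| ->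
  n - #|J| - d.-1 - #|J| <= #|[set D in non_edges | S \subset D]|.
Proof.
move=> S_out link_small; have /setIdP[SJ /eqP Sc] := S_out.
set Y := (~: J :\: S) :\: link S.
have card_Y : #|Y| = n - #|J| - d.-1 - #|link S|.
  rewrite cardsD (setIidPr _); last by apply/subsetP => y /setIdP[].
  by rewrite cardsD (setIidPr SJ) cardsCs setCK card_ord Sc.
have Y_inj : {in Y &, injective (fun y => y |: S)}.
  by apply: sub_in2 (@setU1_inj _ S) => y /setDP[/setDP[_ yS] _]; rewrite inE.
have : #|Y| <= #|[set D in non_edges | S \subset D]|.
  rewrite -(card_in_imset Y_inj); apply/subset_leq_card/subsetP => _ /imsetP[y yY ->].
  move: yY; rewrite !inE => /and3P[yL yS yJ]; rewrite yS yJ /= in yL.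
  rewrite yL subsetUr subUset sub1set !inE yJ (subset_trans SJ) //= andbT cardsU1 yS Sc.
  by apply/eqP; lia.
by rewrite card_Y; lia.
Qed.

(* Double counting: each D in N contains 'C(d, k) sets of size k. *)
Lemma sum_card_supersets (N : {set {set 'I_n}}) k : N \subset outside_sets d ->
  \sum_(S in outside_sets k) #|[set D in N | S \subset D]| = #|N| * 'C(d, k).
Proof.
move=> N_out; under eq_bigr do rewrite card_setId_sum.
rewrite exchange_big /= -sum_nat_const; apply: eq_bigr => D DN.
have /setIdP[DJ /eqP Dd] := subsetP N_out D DN.
rewrite -card_setId_sum -Dd -cards_draws; apply: eq_card => S; rewrite !inE.
by case SD: (S \subset D); rewrite ?andbT ?andbF ?(subset_trans SD DJ).
Qed.

Lemma card_bad_sets_le : #|bad_sets| * (n - #|J| - d.-1 - #|J|) <= #|non_edges| * d.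
Proof.
have -> : #|non_edges| * d
    = \sum_(S in outside_sets d.-1) #|[set D in non_edges | S \subset D]|.
  rewrite sum_card_supersets -?subn1 ?bin_sub ?bin1 //.
  by apply/subsetP => D /setIdP[].
rewrite card_setId_sum big_distrl /=; apply: leq_sum => S S_out.
by case: (leqP #|link S| #|J|) => //= link_small; rewrite mul1n non_edges_through.
Qed.

Lemma card_bad_sets_scaled_le : 4 * #|J| <= n -> 4 * d <= n ->
  #|bad_sets| * n <= 4 * d * #|non_edges|.
Proof.
move=> J_small d_small; have := card_bad_sets_le.
have : n <= 4 * (n - #|J| - d.-1 - #|J|) by lia.
by move: (n - _ - _ - _) => x; nia.
Qed.
End Trace.
End SetSystem.

Local Open Scope ring_scope.

Theorem claim3p10 (R : realType) (d : nat) : (2 <= d)%N ->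
  exists C : R, 0 < C /\ exists n0 : nat, forall n : nat, (n0 <= n)%N ->
  forall (fam : {set {set 'I_n}}) (B : {set 'I_n} -> {set 'I_n})
         (J : {set 'I_n}) (K : R),
    (forall F, F \in fam -> #|F| = d.+1) ->
    vc_dim_le fam d ->
    (forall F, F \in fam -> max_admissible fam F (B F)) ->
    (4 * #|J| <= n)%N ->
    0 <= K ->
    ('C(n - #|J|, d)%:R - K * n%:R <= #|EG fam J|%:R) ->
    #|T4 d fam B J :|: T5 fam B J|%:R
      <= (#|J|%:R - 1) * 'C(n - #|J|, d.-1)%:R + C * K.
Proof.
move=> d_ge2; exists (4 * d)%:R; split; first by rewrite ltr0n; lia.
exists (4 * d)%N => n n_ge fam B J K fam_card _ B_max J_small K_ge0 edges_ge.
have d_gt0 : (0 < d)%N by lia.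
have n_gt0 : 0 < n%:R :> R by rewrite ltr0n; lia.
have := card_TJ_le d_gt0 fam_card B_max J; rewrite -(ler_nat R) !natrD natrM /TJ.
have := card_bad_sets_scaled_le fam d_gt0 J_small n_ge.
rewrite -(ler_nat R) natrM [X in _ <= X]natrM.
have /(congr1 (fun k => k%:R : R)) := card_non_edges fam_card J; rewrite natrD.
set b := #|bad_sets _ _ _|%:R; set m := #|non_edges _ _ _|%:R.
move=> non_edges_eq bad_le TJ_le.
have b_le : b <= (4 * d)%:R * K.
  rewrite -(ler_pM2r n_gt0) -mulrA (le_trans bad_le) // ler_wpM2l //; lra.
rewrite mulrBl mul1r mulrC; lra.
Qed.
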